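(* Let $R=\mathbb{K}[x_{i,i+1},x_{i,i+2}: i\in\mathbb{N}]$ and $I=\ker\varphi$, where $\varphi:R\to\mathbb{K}[x_i: i\in\mathbb{N}]$ is given by $\varphi(x_{i,i+1})=x_ix_{i+1}$, $\varphi(x_{i,i+2})=x_ix_{i+2}$. Then $I$ is not finitely generated up to shift, i.e. there is no finite subset $F\subseteq I$ such that the polynomials $\operatorname{sh}_k(f)$, $f\in F$, $k\in\mathbb{N}_0$, generate $I$.
   Context: $\mathbb{K}$ is a field; $\operatorname{sh}_k$ is the ring endomorphism of $R$ with $x_{i,j}\mapsto x_{i+k,j+k}$. *)

From HB Require Import structures.
From mathcomp Require Import all_boot all_algebra.
From mathcomp Require Import finmap.
From mathcomp Require Import monalg.

Set Implicit Arguments.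
Unset Strict Implicit.
Unset Printing Implicit Defensive.

Import GRing.Theory.
Local Open Scope ring_scope.

(* Commutative polynomial ring K[x_i : i \in I] over a field K, in the
   (possibly infinite) set of variables indexed by the choiceType I:
   the monoid algebra of commutative monomials (multinomials library). *)
Definition polyring (K : fieldType) (I : choiceType) := {malg K[{cmonom I}]}.

Definition pvar (K : fieldType) (I : choiceType) (i : I) : polyring K I :=
  << (ucm i : cmonom I) >>.

(* The K-algebra homomorphism K[x_i : i in I] -> K[x_j : j in J]
   determined by x_i |-> s i (substitution). *)
Definition psubst (K : fieldType) (I J : choiceType) (s : I -> polyring K J)
    (g : polyring K I) : polyring K J :=
  mmap (fun c : K => c%:MP : polyring K J)
       (fun m : cmonom I => \prod_(i <- finsupp m) s i ^+ m i) g.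

(* Variables of R: (i, false) stands for x_{i,i+1}, (i, true) for x_{i,i+2}. *)
Definition RVar := (nat * bool)%type.

Definition Rring (K : fieldType) := polyring K RVar.
Definition Sring (K : fieldType) := polyring K nat.

Definition phi (K : fieldType) : Rring K -> Sring K :=
  psubst (fun v : RVar =>
            pvar K v.1 * pvar K (v.1 + (if v.2 then 2 else 1))%N).

Definition sh (K : fieldType) (k : nat) : Rring K -> Rring K :=
  psubst (fun v : RVar => pvar K ((v.1 + k)%N, v.2)).

Definition in_ideal_gen (A : comRingType) (G : A -> Prop) (p : A) : Prop :=
  exists n (gs cs : 'I_n -> A),
    (forall i, G (gs i)) /\ p = \sum_(i < n) cs i * gs i.

(* For n > 0 let d_n be the phi-degree vector with entries 1, 1, 2 at 0, 1, 2, then 0 at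
   the odd and 2 at the even vertices up to 4n, then 1, 1 at 4n+1, 4n+2.  Nonnegativity
   of exponents forces every monomial of R of phi-degree d_n to vanish on all edges
   touching a vertex of degree 0, and the remaining exponents of the edges x_{2t,2t+2}
   then alternate along the even vertices; hence exactly two monomials u_n, v_n have
   phi-degree d_n, and u_n - v_n lies in I.  Suppose finitely many f in I generated I up
   to shift and all their variables had index < n.  Since phi f = 0, every monomial m of
   f has a partner m' <> m in f with phi m' = phi m.  If a * sh_k m = u_n then
   a * sh_k m' also has phi-degree d_n, so it is u_n (and m' = m) or v_n (impossible: a
   must then be 1, and v_n involves both x_{0,1} and x_{4n+1,4n+2}, too far apart for a
   shift of m').  So no monomial of any sh_k f divides u_n, and u_n cannot occur in the
   ideal generated by the sh_k f, although it occurs in u_n - v_n. *)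

From HB Require Import structures.
From mathcomp Require Import all_boot all_algebra.
From mathcomp Require Import finmap.
From mathcomp Require Import monalg.
From mathcomp Require Import zify.

Set Implicit Arguments.
Unset Strict Implicit.
Unset Printing Implicit Defensive.

Import GRing.Theory.
Local Open Scope ring_scope.

Lemma sum_finsupp_mul_eq (I : choiceType) (m : cmonom I) (w : I) :
  (\sum_(v <- finsupp m) m v * (v == w))%N = m w.
Proof.
have [wm|wNm] := boolP (w \in finsupp m).
  rewrite (big_fsetD1 _ wm) /= eqxx muln1 big1_seq ?addn0 // => v /andP[_].
  by rewrite in_fsetD1 => /andP[/negPf-> _]; rewrite muln0.
rewrite big1_seq; first by apply/esym/eqP; rewrite cmE_eq0.
move=> v /andP[_ vm]; rewrite (_ : v == w = false) ?muln0 //.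
by apply: contraNF wNm => /eqP<-.
Qed.

Lemma sum_finsupp_mul_and (I : choiceType) (m : cmonom I) (b : bool) (w : I) :
  (\sum_(v <- finsupp m) m v * (b && (v == w)))%N = if b then m w else 0%N.
Proof. by case: b; rewrite ?sum_finsupp_mul_eq // big1 // => v _; rewrite muln0. Qed.

Section MonomialMap.
Variables (I J : choiceType) (t : I -> cmonom J).

Definition cmexp (c : cmonom J) (n : nat) : cmonom J := iter n (mmul c) mone.

Lemma cmexpE c n j : cmexp c n j = (n * c j)%N.
Proof. by elim: n => [|n IH] /=; rewrite ?cm1 // cmM IH mulSn. Qed.

Definition cmsubst (m : cmonom I) : cmonom J :=
  \big[mmul/mone]_(v <- finsupp m) cmexp (t v) (m v).

Lemma cmsubstE m j : cmsubst m j = (\sum_(v <- finsupp m) m v * t v j)%N.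
Proof.
rewrite (big_morph (fun c : cmonom J => c j) (fun a b => cmM j a b) (cm1 j)).
by apply: eq_bigr => v _; rewrite cmexpE.
Qed.

End MonomialMap.

Lemma cmsubst_rename (I J : choiceType) (sigma : I -> J) (rho : J -> option I)
    (m : cmonom I) (w : J) :
  (forall v, (sigma v == w) = (rho w == Some v)) ->
  cmsubst (fun v => ucm (sigma v)) m w = if rho w is Some v then m v else 0%N.
Proof.
move=> sr; rewrite cmsubstE; under eq_bigr do rewrite cmU sr.
case: (rho w) => [v|]; last by rewrite big1 // => v _; rewrite muln0.
rewrite -[RHS]sum_finsupp_mul_eq; apply: eq_bigr => v' _.
by rewrite (inj_eq Some_inj) eq_sym.
Qed.

Section MonomialSubstitution.
Variables (K : fieldType) (I J : choiceType).
Variables (s : I -> polyring K J) (t : I -> cmonom J).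
Hypothesis s_mon : forall v, s v = << t v >>.

Lemma malgMU (a b : cmonom J) :
  (<< a >> * << b >> : polyring K J) = << mmul a b >>.
Proof. rewrite malgM_def fgmulUU mulr1; exact: erefl. Qed.

Lemma malgXU (c : cmonom J) n : (<< c >> : polyring K J) ^+ n = << cmexp c n >>.
Proof.
elim: n => [|n IH]; first by rewrite expr0.
rewrite exprS IH malgMU; exact: erefl.
Qed.

Lemma psubst_monE g :
  psubst s g = \sum_(m <- msupp g) (g@_m)%:MP * << cmsubst t m >>.
Proof.
rewrite /psubst mmapE; apply: eq_bigr => m _; apply: congr1.
rewrite (big_morph (fun c : cmonom J => << c >> : polyring K J)
                   (fun a b => esym (malgMU a b)) erefl).
by apply: eq_bigr => v _; rewrite s_mon malgXU.
Qed.

Lemma mcoeff_psubst g M :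
  (psubst s g)@_M = \sum_(m <- msupp g) g@_m * (cmsubst t m == M)%:R.
Proof.
rewrite psubst_monE raddf_sum; apply: eq_bigr => m _.
by rewrite /= mcoeffCM mcoeffU1.
Qed.

Lemma psubstU m : psubst s << m >> = << cmsubst t m >>.
Proof. by rewrite psubst_monE msuppU1 big_seq_fset1 mcoeffU1 eqxx mul1r. Qed.

Lemma psubst_eq0_collision g m : psubst s g = 0 -> m \in msupp g ->
  exists2 m', m' \in msupp g & (m' != m) && (cmsubst t m' == cmsubst t m).
Proof.
move=> g0 mg; apply/hasP/negPn/negP => /hasPn noc.
have := congr1 (mcoeff (cmsubst t m)) g0.
rewrite mcoeff_psubst mcoeff0 (big_fsetD1 m mg) /= eqxx mulr1.
rewrite big1_seq ?addr0 => [gm0|m' /andP[_]].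
  by move: mg; rewrite -mcoeff_neq0 gm0 eqxx.
rewrite in_fsetD1 => /andP[m'm m'g].
by move: (noc m' m'g); rewrite m'm /= => /negPf->; rewrite mulr0.
Qed.

End MonomialSubstitution.

Lemma psubstB (K : fieldType) (I J : choiceType) (s : I -> polyring K J)
    (g g' : polyring K I) :
  psubst s (g - g') = psubst s g - psubst s g'.
Proof. exact: mmapB. Qed.

Lemma mcoeffM_eq0 (R : comNzRingType) (I : choiceType) (c g : {malg R[cmonom I]}) u :
  (forall a b, mmul a b = u -> g@_b = 0) -> (c * g)@_u = 0.
Proof.
move=> g0; apply/eqP; rewrite mcoeff_eq0; apply/negP => /msuppM_le[a [b [_ bg uab]]].
by move: bg; rewrite -mcoeff_neq0 (g0 a b (esym uab)) eqxx.
Qed.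

Lemma in_ideal_gen_mcoeff (R : comNzRingType) (I : choiceType)
    (G : {malg R[cmonom I]} -> Prop) (u : cmonom I) (p : {malg R[cmonom I]}) :
  (forall g, G g -> forall a b, mmul a b = u -> g@_b = 0) ->
  in_ideal_gen G p -> p@_u = 0.
Proof.
move=> G0 [n [gs [cs [Ggs ->]]]]; rewrite raddf_sum big1 // => i _.
exact/mcoeffM_eq0/G0/Ggs.
Qed.

Lemma mcoeff_binomial (K : fieldType) (I : choiceType) (u v : cmonom I) :
  v != u -> (<< u >> - << v >> : polyring K I)@_u = 1.
Proof.
(* Rewriting in a goal containing two monomials << u >> and << v >> makes Coq compare
   them by unfolding, which does not terminate in practice; so this proof, like that of
   phi_binomial below, chains equations with etrans instead. *)
move=> vu.
have uu : (<< u >> : polyring K I)@_u = 1.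
  by apply: etrans (mcoeffU1 _ u u) _; rewrite eqxx.
have vu0 : (<< v >> : polyring K I)@_u = 0.
  by apply: etrans (mcoeffU1 _ v u) _; rewrite (negbTE vu).
exact: etrans (mcoeffB u _ _) (etrans (congr2 (fun a b => a - b) uu vu0) (subr0 1)).
Qed.

Local Open Scope nat_scope.

Definition phideg (w : RVar -> nat) (i : nat) : nat :=
  w (i, false) + w (i, true) + (if i is i'.+1 then w (i', false) else 0)
  + (if i is i'.+2 then w (i', true) else 0).

Lemma phidegE (w : RVar -> nat) i : phideg w i =
  w (i, false) + w (i, true) + (if 0 < i then w (i - 1, false) else 0)
  + (if 1 < i then w (i - 2, true) else 0).
Proof. by case: i => [|[|i]]; rewrite /phideg /= ?subSS ?subn0. Qed.

Lemma eq_phideg (w w' : RVar -> nat) : w =1 w' -> phideg w =1 phideg w'.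
Proof. by move=> ww' [|[|i]]; rewrite /phideg /= !ww'. Qed.

Ltac split_ifs := repeat first
  [ progress rewrite ?orbT ?andbF
  | progress simpl
  | match goal with |- context[if _ then _ else _] =>
      case: ifP => ?; try (exfalso; lia) end ].

Lemma phidegD (w w' : RVar -> nat) i :
  phideg (fun v => w v + w' v) i = phideg w i + phideg w' i.
Proof. by rewrite !phidegE; split_ifs; lia. Qed.

Lemma phideg_ge_src (w : RVar -> nat) j b : w (j, b) <= phideg w j.
Proof. by rewrite /phideg; case: b; lia. Qed.

Lemma phideg_ge_tgt (w : RVar -> nat) j b :
  w (j, b) <= phideg w (j + (if b then 2 else 1)).
Proof. by rewrite /phideg; case: b; rewrite ?addn1 ?addn2 /=; lia. Qed.

Definition phi_var (v : RVar) : cmonom nat :=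
  mmul (ucm v.1) (ucm (v.1 + (if v.2 then 2 else 1))).

Lemma phi_var_mon (K : fieldType) v :
  (pvar K v.1 * pvar K (v.1 + (if v.2 then 2 else 1)))%R = << phi_var v >>.
Proof. exact: malgMU. Qed.

Lemma phi_varE v i : phi_var v i =
  (v == (i, false)) + (v == (i, true)) + ((0 < i) && (v == (i.-1, false)))
  + ((1 < i) && (v == (i.-2, true))).
Proof.
case: v => j b; rewrite /phi_var cmM !cmU !xpair_eqE /=.
by case: b; case: i => [|[|i]] /=; repeat case: eqP => ?; lia.
Qed.

Lemma cmsubst_phi_var (m : cmonom RVar) i : cmsubst phi_var m i = phideg m i.
Proof.
rewrite cmsubstE; under eq_bigr do rewrite phi_varE !mulnDr.
rewrite !big_split /= !sum_finsupp_mul_and !sum_finsupp_mul_eq.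
by case: i => [|[|i]].
Qed.

Definition sh_var (k : nat) (v : RVar) : RVar := (v.1 + k, v.2).

Definition cmshift (k : nat) : cmonom RVar -> cmonom RVar :=
  cmsubst (fun v => ucm (sh_var k v)).

Lemma cmshiftE k (m : cmonom RVar) w :
  cmshift k m w = if k <= w.1 then m (w.1 - k, w.2) else 0.
Proof.
rewrite (@cmsubst_rename _ _ _ (fun w => if k <= w.1 then Some (w.1 - k, w.2) else None)).
  by case: ifP.
case: w => j b [j' b']; rewrite /sh_var !xpair_eqE /=.
case: leqP => kj /=; last by case: eqP => // ?; lia.
rewrite (inj_eq Some_inj) xpair_eqE [b' == b]eq_sym; congr (_ && _).
by apply/eqP/eqP; lia.
Qed.

Lemma mcoeff_sh (K : fieldType) k (g : Rring K) b :
  (sh k g)@_b = (\sum_(m <- msupp g) g@_m * (cmshift k m == b)%:R)%R.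
Proof. exact: mcoeff_psubst. Qed.

Lemma phideg_cmshift k (m : cmonom RVar) i :
  phideg (cmshift k m) i = if k <= i then phideg m (i - k) else 0.
Proof. by rewrite !phidegE !cmshiftE /= -!(subnAC _ k); split_ifs; lia. Qed.

Definition binom_deg (n i : nat) : nat :=
  if i <= 1 then 1 else if i <= 4 * n then (if i %% 2 == 0 then 2 else 0)
  else if i <= 4 * n + 2 then 1 else 0.

(* binom_exp n 0 and binom_exp n 1 are the exponents of
     u_n = x_{0,2} x_{1,2} (x_{4,6} x_{8,10} ... x_{4n-4,4n-2})^2 x_{4n,4n+1} x_{4n,4n+2},
     v_n = x_{0,1} (x_{2,4} x_{6,8} ... x_{4n-2,4n})^2 x_{4n+1,4n+2}. *)
Definition binom_exp (n c : nat) (v : RVar) : nat :=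
  let: (j, b) := v in
  if b then
    if (j == 0) || (j == 4 * n) then 1 - c
    else if (j %% 2 == 0) && (j < 4 * n) then
      (if j %% 4 == 2 then 2 * c else 2 - 2 * c)
    else 0
  else if (j == 0) || (j == 4 * n + 1) then c
  else if (j == 1) || (j == 4 * n) then 1 - c
  else 0.

Lemma phideg_binom_exp n c i :
  0 < n -> c <= 1 -> phideg (binom_exp n c) i = binom_deg n i.
Proof.
move=> n_gt0 c_le1.
by case: i => [|[|i]]; rewrite /phideg /binom_exp /binom_deg /=; split_ifs; lia.
Qed.

Lemma binom_exp_disjoint n v : binom_exp n 0 v = 0 \/ binom_exp n 1 v = 0.
Proof. by case: v => j []; rewrite /binom_exp; split_ifs; lia. Qed.

Lemma binom_exp_eq0 n c j b : 4 * n + 2 <= j -> binom_exp n c (j, b) = 0.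
Proof. by move=> j_ge; case: b; rewrite /binom_exp; split_ifs. Qed.

Section Fiber.
Variables (n : nat) (w : RVar -> nat).
Hypotheses (n_gt0 : 0 < n) (w_deg : forall i, phideg w i = binom_deg n i).

Lemma fiber_vanish j b :
  binom_deg n j = 0 \/ binom_deg n (j + (if b then 2 else 1)) = 0 ->
  w (j, b) = 0.
Proof.
rewrite -!w_deg => -[] deg0.
  by have := phideg_ge_src w j b; rewrite deg0; lia.
by have := phideg_ge_tgt w j b; rewrite deg0; lia.
Qed.

Lemma fiber_start :
  [/\ w (0, false) <= 1, w (0, true) = 1 - w (0, false)
    & w (1, false) = 1 - w (0, false)].
Proof.
have w1t : w (1, true) = 0.
  by apply: fiber_vanish; right; rewrite /binom_deg; split_ifs.
by have := w_deg 0; have := w_deg 1; rewrite /phideg /binom_deg /=; split; lia.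
Qed.

Lemma fiber_even j : 2 <= j < 4 * n -> j %% 2 = 0 ->
  w (j, true) = if j %% 4 == 2 then 2 * w (0, false) else 2 - 2 * w (0, false).
Proof.
have [c_le1 w0t w1f] := fiber_start.
suff ind t : (2 * t).+2 < 4 * n ->
    w ((2 * t).+2, true) = if t %% 2 == 0 then 2 * w (0, false) else 2 - 2 * w (0, false).
  move=> j_range j_even; have := ind (j %/ 2 - 1).
  have -> : (2 * (j %/ 2 - 1)).+2 = j by lia.
  by split_ifs; lia.
elim: t => [|t IH] t_range.
  have w2f : w (2, false) = 0.
    by apply: fiber_vanish; right; rewrite /binom_deg; split_ifs.
  by have := w_deg 2; rewrite muln0 /phideg /binom_deg /=; split_ifs; lia.
have -> : (2 * t.+1).+2 = (2 * t).+4 by lia.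
have wf4 : w ((2 * t).+4, false) = 0.
  by apply: fiber_vanish; right; rewrite /binom_deg; split_ifs.
have wf3 : w ((2 * t).+3, false) = 0.
  by apply: fiber_vanish; left; rewrite /binom_deg; split_ifs.
have := IH (ltac:(lia)); have := w_deg (2 * t).+4.
by rewrite /phideg /binom_deg /=; split_ifs; lia.
Qed.

Lemma fiber_end :
  [/\ w (4 * n, false) = 1 - w (0, false), w (4 * n, true) = 1 - w (0, false)
    & w (4 * n + 1, false) = w (0, false)].
Proof.
have [c_le1 _ _] := fiber_start.
(* Writing 4n as N.+2 keeps the variables of the last three vertices syntactically
   identical in all equations, so that lia sees them as the same atoms. *)
have [N eN] : exists N, 4 * n = N.+2 by exists (4 * n - 2); lia.
have wN := @fiber_even N (ltac:(lia)) (ltac:(lia)).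
have [] : [/\ w (N.+1, false) = 0, w (N.+1, true) = 0, w (N.+3, true) = 0,
    w (N.+4, false) = 0 & w (N.+4, true) = 0].
  by split; apply: fiber_vanish; rewrite /binom_deg /=; split_ifs; lia.
move: wN; have := w_deg N.+2; have := w_deg N.+3; have := w_deg N.+4.
by rewrite addn1 eN /phideg /binom_deg /=; split_ifs; move=> *; split; lia.
Qed.

Lemma fiber_binom_exp v : w v = binom_exp n (w (0, false)) v.
Proof.
have [c_le1 w0t w1f] := fiber_start; have [w4f w4t w5f] := fiber_end.
case: v => j []; rewrite /binom_exp.
  have [->|j0] := eqVneq j 0; first by rewrite w0t; split_ifs.
  have [->|j4] := eqVneq j (4 * n); first by rewrite w4t; split_ifs; lia.
  move: (@fiber_vanish j true) (@fiber_even j).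
  by rewrite /binom_deg /=; split_ifs; lia.
have [->|j0] := eqVneq j 0; first by split_ifs.
have [->|j1] := eqVneq j 1; first by rewrite w1f; split_ifs; lia.
have [->|j4] := eqVneq j (4 * n); first by rewrite w4f; split_ifs; lia.
have [->|j5] := eqVneq j (4 * n + 1); first by rewrite w5f; split_ifs; lia.
by move: (@fiber_vanish j false); rewrite /binom_deg /=; split_ifs; lia.
Qed.

End Fiber.

Lemma binom_divisor_shift_rigid n k (a m m' : cmonom RVar) :
  0 < n -> (forall v, m' v != 0 -> v.1 < n) ->
  (forall i, phideg m' i = phideg m i) ->
  (forall v, a v + cmshift k m v = binom_exp n 0 v) ->
  forall v, m' v = m v.
Proof.
move=> n_gt0 m'_small m'm am.
pose w v := a v + cmshift k m' v.
have w_deg i : phideg w i = binom_deg n i.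
  rewrite -(phideg_binom_exp i n_gt0 (leq0n 1)) -(eq_phideg am) !phidegD.
  by rewrite !phideg_cmshift m'm.
have wE := fiber_binom_exp n_gt0 w_deg.
have [c_le1 _ _] := fiber_start n_gt0 w_deg.
have [c0|c1] : w (0, false) = 0 \/ w (0, false) = 1 by lia.
  case=> j b; have := am (j + k, b); have := wE (j + k, b).
  by rewrite c0 /w !cmshiftE /= leq_addl addnK; lia.
have a0 v : a v = 0.
  have := am v; have := wE v; rewrite c1 /w.
  by case: (binom_exp_disjoint n v) => ->; lia.
have := wE (4 * n + 1, false); move: c1.
rewrite /w !a0 !cmshiftE /binom_exp /= eqxx orbT => w0 w_end.
have k0 : k = 0 by move: w0; case: ifP => //; lia.
subst k; rewrite !subn0 /= in w0 w_end.
by move: (m'_small (4 * n + 1, false)) => /=; lia.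
Qed.

Definition vars_below (N : nat) : {fset RVar} :=
  seq_fset tt [seq (j, b) | j <- iota 0 N, b <- [:: false; true]].

Lemma mem_vars_below N j b : ((j, b) \in vars_below N) = (j < N).
Proof.
rewrite seq_fsetE; apply/allpairsP/idP => [[[j' b'] [] /= + _ [-> _]]|jN].
  by rewrite mem_iota.
by exists (j, b); rewrite mem_iota jN; case: b.
Qed.

Definition binom_mon (n c : nat) : cmonom RVar :=
  [cmonom binom_exp n c v | v in vars_below (4 * n + 2)]%M.

Lemma binom_monE n c v : binom_mon n c v = binom_exp n c v.
Proof.
rewrite cmE /= fsfun_fun; case: v => j b; rewrite mem_vars_below.
by case: ltnP => // jN; rewrite binom_exp_eq0.
Qed.

Local Close Scope nat_scope.

Lemma phi_binomial (K : fieldType) (u v : cmonom RVar) :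
  (forall i, phideg u i = phideg v i) -> phi (<< u >> - << v >> : Rring K) = 0.
Proof.
move=> uv; rewrite /phi psubstB; apply/eqP; rewrite subr_eq0; apply/eqP.
apply: etrans (psubstU (@phi_var_mon K) u) (esym (etrans (psubstU (@phi_var_mon K) v) _)).
suff -> : cmsubst phi_var v = cmsubst phi_var u by [].
by apply/eqP/cmP => i; rewrite !cmsubst_phi_var.
Qed.

Lemma mcoeff_sh_divisor_eq0 (K : fieldType) n (f : Rring K) k (u a b : cmonom RVar) :
  (0 < n)%N -> phi f = 0 ->
  (forall m v, m \in msupp f -> m v != 0%N -> (v.1 < n)%N) ->
  (forall v, u v = binom_exp n 0 v) -> mmul a b = u -> (sh k f)@_b = 0.
Proof.
move=> n_gt0 f0 f_small uE abu.
rewrite mcoeff_sh big1_seq // => m /andP[_ mf].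
case: eqP => [mb|_]; last by rewrite mulr0.
have [m' m'f /andP[m'm /eqP m'phi]] := psubst_eq0_collision (@phi_var_mon K) f0 mf.
case/negP: m'm; apply/cmP; apply: (binom_divisor_shift_rigid (a := a) (k := k) n_gt0).
- by move=> v; apply: f_small.
- by move=> i; rewrite -!cmsubst_phi_var m'phi.
- by move=> v; rewrite mb -uE -abu cmM.
Qed.

Lemma exists_var_bound (K : fieldType) (F : seq (Rring K)) :
  exists2 n, (0 < n)%N & forall f, f \in F ->
    forall m v, m \in msupp f -> m v != 0%N -> (v.1 < n)%N.
Proof.
exists (\max_(f <- F) \max_(m <- msupp f) \max_(v <- finsupp m) v.1).+1%N => //.
move=> f fF m v mf; rewrite cmE_neq0 ltnS => vm.
apply: leq_trans (leq_bigmax_seq f fF isT); apply: leq_trans (leq_bigmax_seq m mf isT).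
exact: (leq_bigmax_seq v vm isT).
Qed.

Theorem corollary6p9 (K : fieldType) :
  ~ exists F : seq (Rring K),
      (forall f, f \in F -> phi f = 0) /\
      (forall p : Rring K,
          phi p = 0 <->
          in_ideal_gen (fun g : Rring K => exists2 f, f \in F & exists k : nat, g = sh k f) p).
Proof.
case=> F [F0 Fgen]; have [n n_gt0 F_small] := exists_var_bound F.
have vu : binom_mon n 1 != binom_mon n 0.
  by apply/negP => /cmP/(_ (0%N, false)); rewrite !binom_monE.
have uv_deg i : phideg (binom_mon n 0) i = phideg (binom_mon n 1) i.
  by rewrite !(eq_phideg (binom_monE _ _)) !phideg_binom_exp.
suff coef0 : (<< binom_mon n 0 >> - << binom_mon n 1 >> : Rring K)@_(binom_mon n 0) = 0.
  by move/eqP: (etrans (esym (mcoeff_binomial K vu)) coef0); rewrite oner_eq0.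
apply: in_ideal_gen_mcoeff ((Fgen _).1 (phi_binomial K uv_deg)).
move=> _ [f fF [k ->]] a b abu.
exact: mcoeff_sh_divisor_eq0 n_gt0 (F0 f fF) (F_small f fF) (binom_monE n 0) abu.
Qed.
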